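(* Let $P$ be a finite graded bowtie-free poset of rank $n$ with $\hat0,\hat1$ and a good $\mathcal{H}_n(0)$ action $U_1,\dots,U_{n-1}$, and for each maximal chain $\mathfrak m$ let $\omega_{\mathfrak m}$ be as defined below. Then: (a) if $U_{i_1}\cdots U_{i_r}(\mathfrak m)=\mathfrak m_0$ is restless, then $s_{i_1}\cdots s_{i_r}$ is a reduced expression for $\omega_{\mathfrak m}$, and conversely for every reduced expression $\omega_{\mathfrak m}=s_{j_1}\cdots s_{j_r}$ the expression $U_{j_1}\cdots U_{j_r}(\mathfrak m)=\mathfrak m_0$ is restless; (b) for $i\in[n-1]$, the permutation $\omega_{\mathfrak m}$ has a descent at $i$ if and only if $U_i(\mathfrak m)\ne\mathfrak m$, and in that case $\omega_{U_i(\mathfrak m)}=\omega_{\mathfrak m}s_i$.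
   Context: $s_i$ is the adjacent transposition $(i\ i+1)$; permutations compose right to left; a permutation $\omega$ has a descent at $i$ if $\omega(i)>\omega(i+1)$. Bowtie-free: no distinct $a,b,c,d$ with $a$ and $b$ each covering both $c$ and $d$. A good $\mathcal{H}_n(0)$ action is a family $U_1,\dots,U_{n-1}$ of maps on the set $\mathcal{M}(P)$ of maximal chains with: $U_i(\mathfrak m)$ agrees with $\mathfrak m$ except possibly at rank $i$; $U_i^2=U_i$; $U_iU_j=U_jU_i$ for $|i-j|\ge2$; $U_iU_{i+1}U_i=U_{i+1}U_iU_{i+1}$; and $\omega F_P=\mathrm{ch}(\chi_P)$ ($\chi_P$ the character of the $\mathcal{H}_n(0)$-module $\mathbb{C}\mathcal{M}(P)$ with $T_i=-U_i$, $F_P$ Ehrenborg's flag quasisymmetric function, $\omega(L_{S,n})=L_{[n-1]\setminus S,n}$, $\mathrm{ch}(\chi_S)=L_{S,n}$ for the one-dimensional characters $\chi_S$). An expression $U_{i_1}\cdots U_{i_r}(\mathfrak m)=\mathfrak m'$ is restless if each successive application of $U_{i_r},U_{i_{r-1}},\dots,U_{i_1}$ changes the chain. Facts from the paper: $P$ has a unique maximal chain $\mathfrak m_0$ with $U_i(\mathfrak m_0)=\mathfrak m_0$ for all $i$; for every maximal chain $\mathfrak m$ there is a restless expression $U_{i_1}\cdots U_{i_r}(\mathfrak m)=\mathfrak m_0$; and the permutation $s_{i_1}\cdots s_{i_r}$ does not depend on the choice of restless expression. This permutation is denoted $\omega_{\mathfrak m}$. *)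

From HB Require Import structures.
From mathcomp Require Import all_boot all_order all_fingroup all_algebra.
Set Implicit Arguments. Unset Strict Implicit. Unset Printing Implicit Defensive.
Import Order.TTheory GRing.Theory.

Local Open Scope order_scope.

Section Poset.
Variables (d : Order.disp_t) (P : finTBPOrderType d).

Definition covers (x y : P) : bool :=
  (x < y) && [forall z : P, ~~ ((x < z) && (z < y))].

Definition graded (rk : P -> nat) (n : nat) : Prop :=
  [/\ rk \bot = 0%N, rk \top = n & forall x y : P, covers x y -> rk y = (rk x).+1].

Definition bowtie_free : Prop :=
  ~ exists a b c e : P,
      [/\ uniq [:: a; b; c; e],
          covers c a /\ covers e a & covers c b /\ covers e b].

Definition is_chain (C : {set P}) : bool :=
  [forall x in C, forall y in C, (x <= y) || (y <= x)].

Definition is_maxchain (C : {set P}) : bool :=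
  is_chain C && [forall D : {set P}, (is_chain D && (C \subset D)) ==> (D == C)].

Definition mchain := {C : {set P} | is_maxchain C}.

End Poset.

Local Open Scope nat_scope.

Definition word (n : nat) (w : seq nat) : bool := all (fun i => 0 < i < n) w.

(* adjacent transposition s_i = (i i+1) of {1..n}, encoded on 'I_n = {0..n-1}
   as the transposition of i-1 and i *)
Definition s_ (n i : nat) : 'S_n :=
  match @insub _ (fun k => k < n) _ i.-1, @insub _ (fun k => k < n) _ i with
  | Some a, Some b => tperm (a : 'I_n) b
  | _, _ => 1%g
  end.

(* s_{i1} ... s_{ir}, composed right to left as functions:
   (perm_of_word n w) x = s_{i1} (s_{i2} ( ... (s_{ir} x))). *)
Definition perm_of_word (n : nat) (w : seq nat) : 'S_n :=
  foldr (fun i p => (p * s_ n i)%g) 1%g w.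

Definition reduced (n : nat) (w : seq nat) : Prop :=
  word n w /\ forall w', word n w' -> perm_of_word n w' = perm_of_word n w ->
                         size w <= size w'.

(* omega has a descent at i (1-indexed): omega(i) > omega(i+1) *)
Definition descent (n : nat) (om : 'S_n) (i : nat) : bool :=
  match @insub _ (fun k => k < n) _ i.-1, @insub _ (fun k => k < n) _ i with
  | Some a, Some b => (val (om b) < val (om (a : 'I_n)))
  | _, _ => false
  end.

Section Action.
Variables (X : finType).

Definition applyU (U : nat -> X -> X) (w : seq nat) (m : X) : X :=
  foldr (fun i x => U i x) m w.

Fixpoint restless_rev (U : nat -> X -> X) (ws : seq nat) (m m' : X) : bool :=
  match ws with
  | [::] => m == m'
  | j :: ws' => (U j m != m) && restless_rev U ws' (U j m) m'
  end.

(* U_{i1}...U_{ir}(m) = m' is restless: U_{ir}, then U_{i(r-1)}, ..., U_{i1} each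
   change the chain *)
Definition restless (U : nat -> X -> X) (w : seq nat) (m m' : X) : bool :=
  restless_rev U (rev w) m m'.

End Action.

Local Open Scope ring_scope.

(* subsets of [n-1]: k : 'I_n.-1 stands for the integer k+1 *)
Definition memS (n : nat) (S : {set 'I_n.-1}) (i : nat) : bool :=
  [exists k in S, ((k : nat).+1 == i)%N].

(* one-dimensional character chi_S of H_n(0): T_i |-> -1 if i in S, 0 otherwise;
   evaluated at T_{i1} ... T_{ir} *)
Definition chi (n : nat) (S : {set 'I_n.-1}) (w : seq nat) : int :=
  \prod_(i <- w) (if memS S i then -1 else 0).

(* character chi_P of C M(P) with T_i = - U_i, evaluated at T_{i1}...T_{ir}:
   the trace of (-U_{i1})...(-U_{ir}) on the permutation-like module C M(P) *)
Definition charP (X : finType) (U : nat -> X -> X) (w : seq nat) : int :=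
  (-1) ^+ size w * (#|[set m | applyU U w m == m]|)%:Z.

(* degree-n quasisymmetric functions, as coordinate vectors in the monomial
   basis M_S, S subset of [n-1] *)
Notation qsym n := {ffun {set 'I_n.-1} -> int}.
Definition Mq (n : nat) (S : {set 'I_n.-1}) : qsym n := [ffun T : {set 'I_n.-1} => (S == T)%:Z].
Definition Lq (n : nat) (S : {set 'I_n.-1}) : qsym n := [ffun T : {set 'I_n.-1} => (S \subset T)%:Z].

Definition rankset d (P : finTBPOrderType d) (rk : P -> nat) (n : nat)
  (C : {set P}) : {set 'I_n.-1} :=
  [set k : 'I_n.-1 | [exists x in C, rk x == (k : nat).+1]].

Definition flagF d (P : finTBPOrderType d) (rk : P -> nat) (n : nat) : qsym n :=
  \sum_(C : {set P} | [&& is_chain C, \bot \in C & \top \in C]) Mq (rankset rk n C).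

(* omega F_P = ch(chi_P): writing F_P = sum_S b_S L_S, we have
   omega F_P = sum_S b_S L_{[n-1]\S}, and ch is the linear isomorphism with
   ch(chi_S) = L_S, so the condition says chi_P = sum_S b_S chi_{[n-1]\S}
   (as functions on H_n(0), i.e. on all products T_{i1}...T_{ir}). *)
Definition char_condition d (P : finTBPOrderType d) (rk : P -> nat) (n : nat)
  (U : nat -> mchain P -> mchain P) : Prop :=
  exists b : {set 'I_n.-1} -> int,
    (forall T, flagF rk n T = \sum_S b S * Lq S T) /\
    forall w, word n w -> charP U w = \sum_S b S * chi (~: S) w.

Definition good_action d (P : finTBPOrderType d) (rk : P -> nat) (n : nat)
  (U : nat -> mchain P -> mchain P) : Prop :=
  [/\ (forall i m, (0 < i < n)%N ->
         [set x in val (U i m) | rk x != i] = [set x in val m | rk x != i]),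
      (forall i m, (0 < i < n)%N -> U i (U i m) = U i m),
      (forall i j m, (0 < i < n)%N -> (0 < j < n)%N -> (i.+1 < j \/ j.+1 < i)%N ->
         U i (U j m) = U j (U i m)),
      (forall i m, (0 < i)%N -> (i.+1 < n)%N ->
         U i (U i.+1 (U i m)) = U i.+1 (U i (U i.+1 m)))
    & char_condition rk n U].

From HB Require Import structures.
From mathcomp Require Import all_boot all_order all_fingroup all_algebra.
From mathcomp Require Import zify.
Set Implicit Arguments. Unset Strict Implicit. Unset Printing Implicit Defensive.

(* The proof rests on the length function [ninversions] of the symmetric group:
   multiplying by [s_i] changes it by one, upward exactly when there is no descent
   at [i].  The 0-Hecke relations make the action of a reduced word depend only on
   the permutation it represents (Matsumoto's theorem); in particular a reduced word
   of a permutation with a descent at [i] absorbs [U_i] on the right.  Applied to the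
   longest permutation this gives a word [W], containing every letter, with
   [U_W U_v = U_W] for all words [v]; the character condition says that [U_W] has
   exactly one fixed point, necessarily [m0], so [U_W] maps every chain to [m0], and
   deleting the idle letters of [W] leaves a restless expression.  Deleting idle
   letters also shows that [ninversions (omega m)] bounds the length of any word
   sending [m] to [m0].  A restless expression that is not reduced would, by
   Matsumoto's theorem, give a shorter word sending [U_i m] to [m0], so restless
   expressions are reduced; conversely a reduced word for [omega m] sends [m] to
   [m0] and cannot contain an idle letter.  Part (b) follows by looking at the last
   letter of a restless expression. *)

Section Inversions.
Variable n : nat.
Implicit Types (s : 'S_n) (a b : 'I_n).

Definition ninversions s : nat :=
  #|[set p : 'I_n * 'I_n | (p.1 < p.2) && (s p.2 < s p.1)]|.

Lemma perm_ltn_total s a b : a != b -> (s a < s b) || (s b < s a).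
Proof. by move=> neq_ab; rewrite -neq_ltn (inj_eq val_inj) (inj_eq perm_inj). Qed.

Lemma perm_ltn_adjacent s a b : b = a.+1 :> nat -> (s a < s b) = ~~ (s b < s a).
Proof.
move=> ba; have /(perm_ltn_total s)/orP[] : a != b by rewrite -val_eqE /= ba neq_ltn ltnSn.
  by move=> lt_ab; rewrite lt_ab ltnNge (ltnW lt_ab).
by move=> lt_ba; rewrite lt_ba ltnNge (ltnW lt_ba).
Qed.

Lemma val_tperm a b u :
  tperm a b u = (if u == a :> nat then b else if u == b :> nat then a else u) :> nat.
Proof.
rewrite !val_eqE; case: tpermP => [->|->|/eqP/negbTE-> /eqP/negbTE->]; rewrite ?eqxx //.
by case: eqP => [->|].
Qed.

Lemma tperm_adjacent_ltn a b u v : b = a.+1 :> nat ->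
  (u, v) != (a, b) -> (u, v) != (b, a) -> (tperm a b u < tperm a b v) = (u < v).
Proof.
rewrite !xpair_eqE -!val_eqE !val_tperm => ba.
by case: (u =P a :> nat); case: (u =P b :> nat); case: (v =P a :> nat);
  case: (v =P b :> nat) => //= *; lia.
Qed.

Lemma ninversions_tpermM a b s : b = a.+1 :> nat -> s a < s b ->
  ninversions (tperm a b * s) = (ninversions s).+1.
Proof.
move=> ba lt_ab; rewrite /ninversions.
set t := tperm a b; pose f (p : 'I_n * 'I_n) := (t p.1, t p.2).
have f_inj : injective f by move=> [x y] [x' y'] [] /perm_inj -> /perm_inj ->.
rewrite (_ : [set p | _] =
    f @^-1: ((b, a) |: [set p : 'I_n * 'I_n | (p.1 < p.2) && (s p.2 < s p.1)])).
  by rewrite card_preimset // cardsU1 inE /= ba ltnNge leqnSn.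
apply/setP => -[x y]; rewrite !inE !permM /f /= xpair_eqE.
have [[-> ->]|Nab] := eqVneq (x, y) (a, b).
  by rewrite /t tpermL tpermR !eqxx ba ltnSn lt_ab.
have [[-> ->]|Nba] := eqVneq (x, y) (b, a).
  by rewrite /t tpermL tpermR -!val_eqE /= ba; lia.
have -> : (t x == b) && (t y == a) = false.
  apply/negbTE; apply: contra Nab => /andP[/eqP tx /eqP ty].
  by rewrite xpair_eqE -(inj_eq (@perm_inj _ t) x) -(inj_eq (@perm_inj _ t) y) tx ty
    /t tpermL tpermR !eqxx.
by rewrite /= tperm_adjacent_ltn.
Qed.

Lemma ninversions1 : ninversions 1%g = 0.
Proof.
apply/eqP; rewrite cards_eq0; apply/eqP/setP => -[x y].
by rewrite !inE !perm1 /=; case: ltngtP.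
Qed.

Lemma perm_increasing_eq1 s : (forall u v : 'I_n, u < v -> s u < s v) -> s = 1%g.
Proof.
have ge_id (f : 'S_n) : {homo f : u v / u < v} -> forall k : 'I_n, k <= f k.
  move=> f_incr [k lt_kn]; elim: k lt_kn => // k IHk lt_kn.
  have lt_k : k < n by lia.
  exact: leq_ltn_trans (IHk lt_k) (f_incr (Ordinal lt_k) (Ordinal lt_kn) (ltnSn k)).
move=> s_incr; have sV_incr : {homo (s^-1)%g : u v / u < v}.
  move=> u v lt_uv; case: ltngtP => // [lt_vu|/val_inj/perm_inj eq_uv].
    by have := s_incr _ _ lt_vu; rewrite !permKV => /(ltn_trans lt_uv); rewrite ltnn.
  by rewrite eq_uv ltnn in lt_uv.
apply/permP => k; rewrite perm1; apply/val_inj/eqP; rewrite eqn_leq ge_id // andbT.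
by have := ge_id _ sV_incr (s k); rewrite permK.
Qed.

End Inversions.

Section AdjacentTranspositions.
Variable n : nat.
Implicit Types (s : 'S_n) (i j : nat) (w : seq nat).

Lemma s_adjacent i : 0 < i < n -> exists a b : 'I_n,
  [/\ a = i.-1 :> nat, b = a.+1 :> nat, s_ n i = tperm a b
    & forall s, descent s i = (s b < s a)].
Proof.
case/andP=> i_gt0 lt_in; have lt_i1n : i.-1 < n by lia.
exists (Ordinal lt_i1n), (Ordinal lt_in).
by rewrite /s_ /descent !insubT /=; split=> //; lia.
Qed.

Lemma s_adjacent_succ i : 0 < i -> i.+1 < n -> exists a b c : 'I_n,
  [/\ b = a.+1 :> nat, c = b.+1 :> nat, s_ n i = tperm a b, s_ n i.+1 = tperm b c
    & forall s, descent s i = (s b < s a) /\ descent s i.+1 = (s c < s b)].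
Proof.
move=> i_gt0 lt_i1n.
have /s_adjacent[a [b [ai ba si di]]] : 0 < i < n by lia.
have /s_adjacent[b' [c [b'i cb' si1 di1]]] : 0 < i.+1 < n by lia.
have eq_b'b : b' = b by apply: val_inj => /=; lia.
rewrite {}eq_b'b in cb' si1 di1.
by exists a, b, c; split=> // s; rewrite di di1.
Qed.

Lemma s_mulss i : (s_ n i * s_ n i = 1)%g.
Proof.
rewrite /s_; case: (@insub _ (fun k => k < n) _ i.-1) => [?|]; last by rewrite mulg1.
by case: (@insub _ (fun k => k < n) _ i) => [?|]; rewrite ?tperm2 ?mulg1.
Qed.

Lemma s_mulK i s : (s_ n i * (s_ n i * s) = s)%g.
Proof. by rewrite mulgA s_mulss mul1g. Qed.

(* [(p * q) x = q (p x)] in MathComp, so [s_ n i * s] is the paper's [s s_i]. *)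
Lemma descent_sM i s : 0 < i < n -> descent (s_ n i * s)%g i = ~~ descent s i.
Proof.
move=> /s_adjacent[a [b [_ ba -> desc_i]]].
by rewrite !desc_i !permM tpermL tpermR (perm_ltn_adjacent _ ba).
Qed.

Lemma ninversions_sM i s : 0 < i < n -> ~~ descent s i ->
  ninversions (s_ n i * s)%g = (ninversions s).+1.
Proof.
move=> /s_adjacent[a [b [_ ba -> desc_i]]]; rewrite desc_i => Nlt.
by apply: ninversions_tpermM => //; rewrite (perm_ltn_adjacent _ ba).
Qed.

Lemma ninversions_descent i s : 0 < i < n -> descent s i ->
  ninversions s = (ninversions (s_ n i * s)%g).+1.
Proof.
by move=> lt_i desc_i; rewrite -{1}(s_mulK i s) ninversions_sM ?descent_sM ?desc_i.
Qed.

Lemma exists_descent s : s != 1%g -> exists2 i, 0 < i < n & descent s i.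
Proof.
move=> s_neq1.
case: (boolP [exists i : 'I_n, (0 < i) && descent s i]).
  by case/fintype.existsP=> i /andP[i_gt0 desc_i]; exists i => //; apply/andP.
rewrite negb_exists => /fintype.forallP no_desc; case/eqP: s_neq1.
have adj_incr (u v : 'I_n) : v = u.+1 :> nat -> s u < s v.
  move=> vu; have /s_adjacent[a [b [au ba _ desc_v]]] : 0 < v < n by rewrite ltn_ord vu.
  move: desc_v; have -> : a = u by apply: val_inj; rewrite /= au vu.
  have -> : b = v by apply: val_inj; rewrite /= ba au vu.
  move=> desc_v.
  by have := no_desc v; rewrite desc_v {1}vu /= (perm_ltn_adjacent _ vu).
apply: perm_increasing_eq1 => u v; move: {2}(v - u.+1) (erefl (v - u.+1)) => k.
elim: k v => [|k IHk] v vu lt_uv.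
  by apply: adj_incr; lia.
have lt_v1n : v.-1 < n by have := ltn_ord v; lia.
apply: ltn_trans (IHk (Ordinal lt_v1n) _ _) (adj_incr _ _ _) => /=; lia.
Qed.

Lemma s_braid i : 0 < i -> i.+1 < n ->
  (s_ n i * s_ n i.+1 * s_ n i = s_ n i.+1 * s_ n i * s_ n i.+1)%g.
Proof.
move=> i_gt0 lt_i1n; have [a [b [c [ba cb -> -> _]]]] := s_adjacent_succ i_gt0 lt_i1n.
have [Nab Nac Nbc] : [/\ a != b, a != c & b != c] by rewrite -!val_eqE /= cb ba; split; lia.
have conj_tperm (x y u v : 'I_n) :
    (tperm x y * tperm u v * tperm x y = tperm u v ^ tperm x y)%g.
  by rewrite /conjg tpermV mulgA.
by rewrite !conj_tperm !tpermJ tpermR tpermL (tpermD Nac Nbc) tpermD // eq_sym.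
Qed.

Lemma s_commute i j : 0 < i < n -> 0 < j < n -> i.+1 < j ->
  commute (s_ n i) (s_ n j).
Proof.
move=> /[dup] /andP[i_gt0 _] /s_adjacent[a [b [ai ba -> _]]].
move=> /s_adjacent[c [e [cj ec -> _]]] lt_i1j.
have [Nac Nae Nbc Nbe] : [/\ a != c, a != e, b != c & b != e].
  by rewrite -!val_eqE /= ec cj ba ai; split; lia.
by apply/commgP/conjg_fixP; rewrite tpermJ !tpermD // eq_sym.
Qed.

Lemma descent_sM_far i j s : 0 < i < n -> 0 < j < n -> (i.+1 < j) || (j.+1 < i) ->
  descent (s_ n i * s)%g j = descent s j.
Proof.
move=> /[dup] /andP[i_gt0 _] /s_adjacent[a [b [ai ba -> _]]].
move=> /[dup] /andP[j_gt0 _] /s_adjacent[c [e [cj ec _ desc_j]]] far_ij.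
have [Nac Nae Nbc Nbe] : [/\ a != c, a != e, b != c & b != e].
  by rewrite -!val_eqE /= ec cj ba ai; split; lia.
by rewrite !desc_j !permM !tpermD.
Qed.

Lemma descent_braid i s : 0 < i -> i.+1 < n ->
  descent (s_ n i.+1 * (s_ n i * s))%g i = descent s i.+1 /\
  descent (s_ n i * (s_ n i.+1 * s))%g i.+1 = descent s i.
Proof.
move=> i_gt0 lt_i1n; have [a [b [c [ba cb -> -> desc]]]] := s_adjacent_succ i_gt0 lt_i1n.
have [Nab Nac Nbc] : [/\ a != b, a != c & b != c] by rewrite -!val_eqE /= cb ba; split; lia.
have tab_c : tperm a b c = c by rewrite tpermD.
have tbc_a : tperm b c a = a by rewrite tpermD // eq_sym.
by rewrite !(proj1 (desc _)) !(proj2 (desc _)) !permM !tpermL !tpermR tab_c tbc_a tpermL tpermR.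
Qed.

Lemma descent_sM_succ i s : 0 < i -> i.+1 < n -> descent s i -> descent s i.+1 ->
  descent (s_ n i * s)%g i.+1 /\ descent (s_ n i.+1 * s)%g i.
Proof.
move=> i_gt0 lt_i1n; have [a [b [c [ba cb -> -> desc]]]] := s_adjacent_succ i_gt0 lt_i1n.
have [Nab Nac Nbc] : [/\ a != b, a != c & b != c] by rewrite -!val_eqE /= cb ba; split; lia.
have tab_c : tperm a b c = c by rewrite tpermD.
have tbc_a : tperm b c a = a by rewrite tpermD // eq_sym.
rewrite !(proj1 (desc _)) !(proj2 (desc _)) !permM tpermL tpermR tab_c tbc_a.
by move=> lt_ba lt_cb; split; exact: ltn_trans lt_cb lt_ba.
Qed.

Definition longest_perm : 'S_n := perm (@rev_ord_inj n).

Lemma descent_longest_perm i : 0 < i < n -> descent longest_perm i.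
Proof.
move=> /s_adjacent[a [b [_ ba _ ->]]]; rewrite !permE /= ba.
by have := ltn_ord b; rewrite ba; lia.
Qed.

End AdjacentTranspositions.

Section Words.
Variable n : nat.
Implicit Types (s : 'S_n) (i : nat) (w : seq nat).

Lemma word_rcons w i : word n (rcons w i) = word n w && (0 < i < n).
Proof. by rewrite /word all_rcons andbC. Qed.

Lemma word_subseq z w : subseq z w -> word n w -> word n z.
Proof. by move=> sub_zw /allP w_word; apply/allP => i /(mem_subseq sub_zw)/w_word. Qed.

Lemma perm_of_word_rcons w i : perm_of_word n (rcons w i) = (s_ n i * perm_of_word n w)%g.
Proof.
rewrite /perm_of_word foldr_rcons /= mul1g.
by elim: w => [|j w IHw] /=; rewrite ?mulg1 // IHw mulgA.
Qed.

Lemma ninversions_perm_of_word w : word n w -> ninversions (perm_of_word n w) <= size w.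
Proof.
elim/last_ind: w => [|w i IHw]; first by rewrite ninversions1.
rewrite word_rcons perm_of_word_rcons size_rcons => /andP[/IHw le_w lt_i].
have [desc_i|Ndesc_i] := boolP (descent (perm_of_word n w) i).
  by move: le_w; rewrite (ninversions_descent lt_i desc_i) => /ltnW /leqW.
by rewrite ninversions_sM.
Qed.

Definition reduced_for w s : bool :=
  [&& word n w, perm_of_word n w == s & size w == ninversions s].

Lemma reduced_for_rcons w i s :
  reduced_for (rcons w i) s = [&& 0 < i < n, descent s i & reduced_for w (s_ n i * s)%g].
Proof.
rewrite /reduced_for word_rcons perm_of_word_rcons size_rcons.
have [lt_i|_] := boolP (0 < i < n); last by rewrite andbF.
have -> : (s_ n i * perm_of_word n w == s)%g = (perm_of_word n w == s_ n i * s)%g.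
  by rewrite -[in RHS](can_eq (s_mulK i)) s_mulK.
case: (perm_of_word n w =P s_ n i * s)%g => [perm_w|]; last by rewrite !andbF.
have [desc_i|Ndesc_i] := boolP (descent s i).
  by rewrite (ninversions_descent lt_i desc_i) eqSS andbT.
rewrite andbT andbF; case w_word: (word n w) => //=; apply/negbTE.
by have := ninversions_perm_of_word w_word; rewrite perm_w ninversions_sM //; lia.
Qed.

Lemma reduced_for_exists s : exists w, reduced_for w s.
Proof.
move: {2}(ninversions s) (erefl (ninversions s)) => k; elim: k s => [|k IHk] s ks.
all: have [->|/exists_descent[i lt_i desc_i]] := eqVneq s 1%g.
all: try by exists [::]; rewrite /reduced_for /perm_of_word /= eqxx ninversions1.
  by rewrite (ninversions_descent lt_i desc_i) in ks.
have [|w w_red] := IHk (s_ n i * s)%g.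
  by move: ks; rewrite (ninversions_descent lt_i desc_i) => -[].
by exists (rcons w i); rewrite reduced_for_rcons lt_i desc_i.
Qed.

Lemma reduced_forP w : reflect (reduced n w) (reduced_for w (perm_of_word n w)).
Proof.
apply: (iffP and3P) => [[w_word _ /eqP size_w]|[w_word w_min]].
  by split=> // w' w'_word eq_w'w; rewrite size_w -eq_w'w ninversions_perm_of_word.
split=> //; rewrite eqn_leq ninversions_perm_of_word // andbT.
have [w' /and3P[w'_word /eqP perm_w' /eqP <-]] := reduced_for_exists (perm_of_word n w).
exact: w_min.
Qed.

Lemma braid_reduced_words s i : 0 < i -> i.+1 < n -> descent s i -> descent s i.+1 ->
  exists c, reduced_for (c ++ [:: i; i.+1; i]) s && reduced_for (c ++ [:: i.+1; i; i.+1]) s.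
Proof.
move=> i_gt0 lt_i1n desc_i desc_i1.
have [lt_i lt_i1] : 0 < i < n /\ 0 < i.+1 < n by split; apply/andP; split; lia.
have [up down] := descent_sM_succ i_gt0 lt_i1n desc_i desc_i1.
have [braid_l braid_r] := descent_braid s i_gt0 lt_i1n.
have braid_eq : (s_ n i * (s_ n i.+1 * (s_ n i * s)) =
                 s_ n i.+1 * (s_ n i * (s_ n i.+1 * s)))%g by rewrite !mulgA s_braid.
have [c c_red] := reduced_for_exists (s_ n i * (s_ n i.+1 * (s_ n i * s)))%g.
exists c; rewrite -!cat_rcons !cats0 !reduced_for_rcons -braid_eq c_red.
by rewrite braid_l braid_r lt_i lt_i1 desc_i desc_i1 up down.
Qed.

Lemma commute_reduced_words s i j : 0 < i < n -> 0 < j < n -> i.+1 < j ->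
  descent s i -> descent s j ->
  exists c, reduced_for (c ++ [:: j; i]) s && reduced_for (c ++ [:: i; j]) s.
Proof.
move=> lt_i lt_j lt_i1j desc_i desc_j.
have far_ij : (i.+1 < j) || (j.+1 < i) by rewrite lt_i1j.
have far_ji : (j.+1 < i) || (i.+1 < j) by rewrite orbC.
have comm_eq : (s_ n j * (s_ n i * s) = s_ n i * (s_ n j * s))%g
  by rewrite !mulgA (s_commute lt_i lt_j lt_i1j).
have [c c_red] := reduced_for_exists (s_ n j * (s_ n i * s))%g.
exists c; rewrite -!cat_rcons !cats0 !reduced_for_rcons -comm_eq c_red.
by rewrite !descent_sM_far // lt_i lt_j desc_i desc_j.
Qed.

End Words.

Section HeckeAction.
Variables (n : nat) (X : finType) (U : nat -> X -> X).
Implicit Types (s : 'S_n) (i j : nat) (w : seq nat) (m : X).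

Lemma applyU_rcons w i m : applyU U (rcons w i) m = applyU U w (U i m).
Proof. by rewrite /applyU foldr_rcons. Qed.

Lemma applyU_cat v w m : applyU U (v ++ w) m = applyU U v (applyU U w m).
Proof. by rewrite /applyU foldr_cat. Qed.

Lemma restless_rcons w i m m' :
  restless U (rcons w i) m m' = (U i m != m) && restless U w (U i m) m'.
Proof. by rewrite /restless rev_rcons. Qed.

Lemma restless_applyU w m m' : restless U w m m' -> applyU U w m = m'.
Proof.
elim/last_ind: w m => [|w i IHw] m; first by move/eqP.
by rewrite restless_rcons applyU_rcons => /andP[_ /IHw].
Qed.

Lemma restless_subseq w m m' : applyU U w m = m' -> exists2 z, subseq z w & restless U z m m'.
Proof.
elim/last_ind: w m => [|w i IHw] m.
  by move=> <-; exists [::]; rewrite // /restless /= eqxx.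
rewrite applyU_rcons; have [Uim_eq|Uim_neq] := eqVneq (U i m) m.
  rewrite Uim_eq => /IHw[z sub_zw rl_z].
  by exists z => //; apply: subseq_trans sub_zw (subseq_rcons w i).
move=> /IHw[z sub_zw rl_z]; exists (rcons z i).
  by rewrite -!cats1 cat_subseq.
by rewrite restless_rcons Uim_neq.
Qed.

Hypothesis U_idem : forall i m, 0 < i < n -> U i (U i m) = U i m.
Hypothesis U_comm : forall i j m, 0 < i < n -> 0 < j < n -> (i.+1 < j \/ j.+1 < i) ->
  U i (U j m) = U j (U i m).
Hypothesis U_braid : forall i m, 0 < i -> i.+1 < n ->
  U i (U i.+1 (U i m)) = U i.+1 (U i (U i.+1 m)).

Lemma reduced_words_agree s i j : 0 < i < n -> 0 < j < n -> descent s i -> descent s j ->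
  exists x y, [/\ reduced_for (rcons x i) s, reduced_for (rcons y j) s
    & applyU U (rcons x i) =1 applyU U (rcons y j)].
Proof.
wlog le_ij : i j / i <= j => [wlog_le lt_i lt_j desc_i desc_j|].
  case: (leqP i j) => [le_ij|/ltnW le_ji]; first exact: wlog_le.
  have [x [y [red_x red_y agree]]] := wlog_le j i le_ji lt_j lt_i desc_j desc_i.
  by exists y, x; split=> // m; rewrite agree.
move=> lt_i lt_j desc_i desc_j.
have [<-|neq_ij] := eqVneq i j.
  have [x red_x] := reduced_for_exists (s_ n i * s)%g.
  by exists x, x; rewrite reduced_for_rcons lt_i desc_i red_x.
case: (ltngtP i.+1 j) => [far_ij|lt_ji1|j_eq].
- have [c /andP[red1 red2]] := commute_reduced_words lt_i lt_j far_ij desc_i desc_j.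
  exists (c ++ [:: j]), (c ++ [:: i]); rewrite !rcons_cat; split=> // m.
  by rewrite !applyU_cat /= U_comm //; right.
- by move: neq_ij; rewrite eqn_leq le_ij; lia.
- have i_gt0 : 0 < i by case/andP: lt_i.
  have lt_i1n : i.+1 < n by rewrite j_eq; case/andP: lt_j.
  rewrite -j_eq in desc_j *.
  have [c /andP[red1 red2]] := braid_reduced_words i_gt0 lt_i1n desc_i desc_j.
  exists (c ++ [:: i; i.+1]), (c ++ [:: i.+1; i]); rewrite !rcons_cat; split=> // m.
  by rewrite !applyU_cat /= U_braid.
Qed.

Lemma matsumoto s a b : reduced_for a s -> reduced_for b s -> applyU U a =1 applyU U b.
Proof.
move: {2}(size a) (erefl (size a)) => k; elim: k s a b => [|k IHk] s a b.
  move=> /size0nil -> /and3P[_ _ /eqP sz0] /and3P[_ _ /eqP].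
  by rewrite -sz0 => /size0nil ->.
case/lastP: a => [//|a i] /eqP; rewrite size_rcons eqSS => /eqP size_a red_ai red_b.
case/lastP: b red_b => [|b j] red_b.
  by move: red_ai red_b => /and3P[_ _ /eqP sz_ai] /and3P[_ _ /eqP]; rewrite -sz_ai size_rcons.
move: red_ai red_b; rewrite !reduced_for_rcons.
move=> /and3P[lt_i desc_i red_a] /and3P[lt_j desc_j red_b] m.
have [x [y [red_xi red_yj agree]]] := reduced_words_agree lt_i lt_j desc_i desc_j.
move: red_xi red_yj; rewrite !reduced_for_rcons => /and3P[_ _ red_x] /and3P[_ _ red_y].
have size_b : size b = k.
  move: (red_a) (red_b) => /and3P[_ _ /eqP sz_a] /and3P[_ _ /eqP sz_b].
  by apply: succn_inj; rewrite -size_a sz_a sz_b -!ninversions_descent.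
rewrite !applyU_rcons (IHk _ _ _ size_a red_a red_x) -applyU_rcons agree applyU_rcons.
by rewrite (IHk _ _ _ size_b red_b red_y).
Qed.

Lemma applyU_descent s a i m : reduced_for a s -> 0 < i < n -> descent s i ->
  applyU U a (U i m) = applyU U a m.
Proof.
move=> red_a lt_i desc_i.
have [x red_x] := reduced_for_exists (s_ n i * s)%g.
have red_xi : reduced_for (rcons x i) s by rewrite reduced_for_rcons lt_i desc_i.
by rewrite !(matsumoto red_a red_xi) !applyU_rcons U_idem.
Qed.

Lemma applyU_longest_perm R v m : reduced_for R (longest_perm n) -> word n v ->
  applyU U R (applyU U v m) = applyU U R m.
Proof.
move=> red_R; elim: v => //= j v IHv /andP[lt_j /IHv <-].
by rewrite (applyU_descent _ red_R) // descent_longest_perm.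
Qed.

End HeckeAction.

Section GradedPoset.
Import Order.TTheory.
Variables (d : Order.disp_t) (P : finTBPOrderType d) (n : nat) (rk : P -> nat).
Hypothesis rk_graded : graded rk n.

Lemma rank_lt (x y : P) : (x < y)%O -> rk x < rk y.
Proof.
case: rk_graded => _ _ rk_covers.
move: {2}#|_| (leqnn #|[set z | (x < z < y)%O]|) => k.
elim: k x y => [|k IHk] x y card_xy lt_xy.
  suff /rk_covers -> : covers x y by [].
  rewrite /covers lt_xy; apply/forallP => z; apply/negP => z_xy.
  by move: card_xy; rewrite leqn0 cards_eq0 => /eqP/setP/(_ z); rewrite !inE z_xy.
have [xy_empty|[z]] := set_0Vmem [set z | (x < z < y)%O].
  by apply: IHk => //; rewrite xy_empty cards0.
rewrite inE => /andP[lt_xz lt_zy].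
have card_lt (A : {set P}) : A \proper [set z | (x < z < y)%O] -> #|A| <= k.
  by move=> /proper_card lt_A; rewrite -ltnS (leq_trans lt_A card_xy).
apply: ltn_trans (IHk x z (card_lt _ _) lt_xz) (IHk z y (card_lt _ _) lt_zy).
  apply/properP; split; last by exists z; rewrite !inE ?lt_xz ?lt_zy ?ltxx ?andbF.
  by apply/subsetP => t; rewrite !inE => /andP[-> /lt_trans->].
apply/properP; split; last by exists z; rewrite !inE ?lt_xz ?lt_zy ?ltxx.
by apply/subsetP => t; rewrite !inE => /andP[lt_zt ->]; rewrite (lt_trans lt_xz lt_zt).
Qed.

Lemma rankset_eq0 (C : {set P}) : \bot%O \in C -> \top%O \in C ->
  (rankset rk n C == set0) = (C == [set \bot%O; \top%O]).
Proof.
case: rk_graded => rk_bot rk_top _ botC topC.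
apply/eqP/eqP => [rs_C0|->].
  apply/setP => x; rewrite !inE; apply/idP/idP => [xC|/orP[]/eqP-> //].
  apply/negPn/negP; rewrite negb_or => /andP[Nbot Ntop].
  have := rank_lt (x := \bot%O) (y := x); have := rank_lt (x := x) (y := \top%O).
  rewrite lt_def eq_sym Ntop lex1 lt_def Nbot le0x rk_bot rk_top => /(_ isT) lt_xn /(_ isT) x_gt0.
  have lt_k : (rk x).-1 < n.-1 by lia.
  have /negP[] : Ordinal lt_k \notin rankset rk n C by rewrite rs_C0 inE.
  by rewrite inE; apply/fintype.existsP; exists x; rewrite xC /= prednK.
apply/setP => k; rewrite !inE; apply/negbTE/negP => /fintype.existsP[x /andP[]].
by rewrite !inE => /orP[]/eqP-> /eqP; rewrite ?rk_bot ?rk_top //; have := ltn_ord k; lia.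
Qed.

Lemma flagF_set0 : flagF rk n set0 = 1%R.
Proof.
set C0 := [set (\bot%O : P); \top%O].
have [botC0 topC0] : \bot%O \in C0 /\ \top%O \in C0 by rewrite !inE !eqxx orbT.
have C0_chain : is_chain C0.
  apply/forall_inP => x _; apply/forall_inP => y.
  by rewrite !inE => /orP[]/eqP->; rewrite ?le0x ?lex1 ?orbT.
rewrite /flagF sum_ffunE (bigD1 C0) ?C0_chain ?botC0 ?topC0 //= ffunE.
rewrite (rankset_eq0 botC0 topC0) eqxx big1 ?GRing.addr0 // => C /andP[/and3P[_ botC topC] NC0].
by rewrite ffunE (rankset_eq0 botC topC) (negbTE NC0).
Qed.

End GradedPoset.

Section HeckeCharacter.
Import GRing.Theory.
Local Open Scope ring_scope.

Lemma chi_setC0 n W : word n W -> chi (~: set0 : {set 'I_n.-1}) W = (-1) ^+ size W.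
Proof.
rewrite /chi; elim: W => [|i W IHW]; rewrite ?big_nil ?big_cons //= => /andP[lt_i /IHW->].
have lt_k : (i.-1 < n.-1)%N by lia.
rewrite exprS ifT //; apply/fintype.existsP; exists (Ordinal lt_k); rewrite !inE /=.
by apply/eqP; lia.
Qed.

Lemma chi_setC_eq0 n (S : {set 'I_n.-1}) W : S != set0 ->
  (forall i, (0 < i < n)%N -> i \in W) -> chi (~: S) W = 0.
Proof.
case/set0Pn => k kS W_full; apply/eqP; rewrite /chi prodf_seq_eq0; apply/hasP.
exists k.+1; first by apply: W_full; have := ltn_ord k; lia.
suff -> : memS (~: S) k.+1 = false by [].
apply/negbTE/fintype.existsP => -[k' /andP[k'NS /eqP/succn_inj/val_inj k'k]].
by rewrite k'k inE kS in k'NS.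
Qed.

Lemma card_fixed_applyU d (P : finTBPOrderType d) n (rk : P -> nat) U W :
  graded rk n -> char_condition rk n U -> word n W ->
  (forall i, (0 < i < n)%N -> i \in W) -> #|[set m | applyU U W m == m]| = 1%N.
Proof.
move=> rk_graded [b [flag_b char_b]] W_word W_full.
have b0 : b set0 = 1.
  have := flag_b set0; rewrite flagF_set0 // (bigD1 set0) //= big1 => [|S NS].
    by rewrite /Lq ffunE sub0set mulr1 addr0.
  by rewrite /Lq ffunE subset0 (negbTE NS) mulr0.
have := char_b W W_word; rewrite (bigD1 set0) //= big1 => [|S NS]; last first.
  by rewrite chi_setC_eq0 ?mulr0.
rewrite addr0 b0 mul1r chi_setC0 // /charP -[RHS]mulr1 => /(can_inj (signrMK _)).
by case.
Qed.

End HeckeCharacter.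

Section RestlessExpressions.
Variables (d : Order.disp_t) (P : finTBPOrderType d) (n : nat) (rk : P -> nat).
Hypothesis rk_graded : graded rk n.
Variable U : nat -> mchain P -> mchain P.
Hypothesis U_idem : forall i m, 0 < i < n -> U i (U i m) = U i m.
Hypothesis U_comm : forall i j m, 0 < i < n -> 0 < j < n -> (i.+1 < j \/ j.+1 < i) ->
  U i (U j m) = U j (U i m).
Hypothesis U_braid : forall i m, 0 < i -> i.+1 < n ->
  U i (U i.+1 (U i m)) = U i.+1 (U i (U i.+1 m)).
Hypothesis U_char : char_condition rk n U.
Variable m0 : mchain P.
Hypothesis U_m0 : forall i, 0 < i < n -> U i m0 = m0.
Variable omega : mchain P -> 'S_n.
Hypothesis omegaE : forall m w, word n w -> restless U w m m0 -> omega m = perm_of_word n w.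

Lemma applyU_m0 v : word n v -> applyU U v m0 = m0.
Proof. by elim: v => //= j v IHv /andP[lt_j /IHv->]; rewrite U_m0. Qed.

Lemma exists_restless m : exists2 w, word n w & restless U w m m0.
Proof.
have [R red_R] := reduced_for_exists (longest_perm n).
have R_word : word n R by case/and3P: red_R.
pose W := iota 1 n.-1 ++ R.
have W_word : word n W.
  rewrite /word all_cat; apply/andP; split; last exact: R_word.
  by apply/allP => i; rewrite mem_iota; lia.
have W_full i : 0 < i < n -> i \in W by move=> lt_i; rewrite mem_cat mem_iota; lia.
have absorb v x : word n v -> applyU U W (applyU U v x) = applyU U W x.
  by move=> v_word; rewrite !applyU_cat (applyU_longest_perm U_idem U_comm U_braid _ red_R).
have /eqP/cards1P[x fixed_W] := card_fixed_applyU rk_graded U_char W_word W_full.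
have fixed_eq y : applyU U W y = y -> y = x.
  by move=> fixed_y; apply/set1P; rewrite -fixed_W inE fixed_y.
have : applyU U W m = m0.
  by rewrite (fixed_eq m0 (applyU_m0 W_word)); apply: fixed_eq; rewrite absorb.
by case/restless_subseq=> z sub_zW rl_z; exists z; first exact: word_subseq W_word.
Qed.

Lemma ninversions_omega_le m v : word n v -> applyU U v m = m0 ->
  ninversions (omega m) <= size v.
Proof.
move=> v_word /restless_subseq[z sub_zv rl_z].
have z_word := word_subseq sub_zv v_word.
by rewrite (omegaE z_word rl_z) (leq_trans (ninversions_perm_of_word z_word)) ?size_subseq.
Qed.

Lemma restless_reduced m w : word n w -> restless U w m m0 -> reduced_for w (omega m).
Proof.
elim/last_ind: w m => [|w i IHw] m.
  move=> w_word rl_w; rewrite (omegaE w_word rl_w) /reduced_for /perm_of_word /=.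
  by rewrite eqxx ninversions1.
rewrite word_rcons restless_rcons => /andP[w_word lt_i] /andP[Uim_neq rl_w].
have red_w := IHw _ w_word rl_w.
have omega_m : omega m = (s_ n i * omega (U i m))%g.
  rewrite (omegaE w_word rl_w) -perm_of_word_rcons; apply: omegaE.
    by rewrite word_rcons w_word lt_i.
  by rewrite restless_rcons Uim_neq.
suff Ndesc_i : ~~ descent (omega (U i m)) i.
  by rewrite omega_m reduced_for_rcons lt_i descent_sM // Ndesc_i s_mulK.
apply/negP => desc_i.
have [x red_x] := reduced_for_exists (s_ n i * omega (U i m))%g.
have red_xi : reduced_for (rcons x i) (omega (U i m)) by rewrite reduced_for_rcons lt_i desc_i.
have reach_x : applyU U x (U i m) = m0.
  rewrite -U_idem // -applyU_rcons -(matsumoto U_comm U_braid red_w red_xi).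
  exact: restless_applyU rl_w.
move: red_x => /and3P[x_word _ /eqP size_x].
have := ninversions_omega_le x_word reach_x.
by rewrite size_x (ninversions_descent lt_i desc_i) ltnn.
Qed.

Lemma reduced_restless m w : reduced_for w (omega m) -> restless U w m m0.
Proof.
move=> red_w; have [v v_word rl_v] := exists_restless m.
have /restless_subseq[z sub_zw rl_z] : applyU U w m = m0.
  rewrite (matsumoto U_comm U_braid red_w (restless_reduced v_word rl_v)).
  exact: restless_applyU rl_v.
have w_word : word n w by case/and3P: red_w.
have /and3P[_ _ /eqP size_z] := restless_reduced (word_subseq sub_zw w_word) rl_z.
move: red_w => /and3P[_ _ /eqP size_w].
suff /eqP <- : z == w by [].
by rewrite -(size_subseq_leqif sub_zw).2 size_z size_w.
Qed.

Lemma omega_step m i : 0 < i < n -> U i m != m ->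
  descent (omega m) i /\ omega (U i m) = (s_ n i * omega m)%g.
Proof.
move=> lt_i Uim_neq; have [x x_word rl_x] := exists_restless (U i m).
have rl_xi : restless U (rcons x i) m m0 by rewrite restless_rcons Uim_neq.
have := restless_reduced (w := rcons x i); rewrite word_rcons x_word lt_i.
move=> /(_ m isT rl_xi); rewrite reduced_for_rcons => /and3P[_ desc_i /and3P[_ /eqP <- _]].
by split=> //; apply: omegaE.
Qed.

Lemma descent_omega m i : 0 < i < n -> descent (omega m) i = (U i m != m).
Proof.
move=> lt_i; have [Uim_eq|Uim_neq] := eqVneq (U i m) m; last exact: (omega_step lt_i Uim_neq).1.
apply/negP => desc_i.
have [x red_x] := reduced_for_exists (s_ n i * omega m)%g.
have : reduced_for (rcons x i) (omega m) by rewrite reduced_for_rcons lt_i desc_i.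
by move/reduced_restless; rewrite restless_rcons Uim_eq eqxx.
Qed.

End RestlessExpressions.

Theorem mainTheorem13 (d : Order.disp_t) (P : finTBPOrderType d) (n : nat)
  (rk : P -> nat) (Hgr : graded rk n) (Hbt : bowtie_free P)
  (U : nat -> mchain P -> mchain P) (Hgood : good_action rk n U)
  (m0 : mchain P) (Hm0 : forall i, (0 < i < n)%N -> U i m0 = m0)
  (omega : mchain P -> 'S_n)
  (Homega : forall m w, word n w -> restless U w m m0 -> omega m = perm_of_word n w) :
  (forall m w, word n w -> restless U w m m0 ->
     reduced n w /\ perm_of_word n w = omega m) /\
  (forall m w, reduced n w -> perm_of_word n w = omega m -> restless U w m m0) /\
  (forall m i, (0 < i < n)%N ->
     (descent (omega m) i = (U i m != m)) /\
     (U i m != m -> omega (U i m) = (s_ n i * omega m)%g)).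
Proof.
case: Hgood => _ U_idem U_comm U_braid U_char.
split; [|split].
- move=> m w w_word rl_w.
  have := restless_reduced U_idem U_comm U_braid Homega w_word rl_w.
  by rewrite (Homega _ _ w_word rl_w) => /reduced_forP.
- move=> m w /reduced_forP red_w perm_w.
  by apply: (reduced_restless Hgr U_idem U_comm U_braid U_char Hm0 Homega); rewrite -perm_w.
- move=> m i lt_i; split; first exact: (descent_omega Hgr U_idem U_comm U_braid U_char Hm0 Homega).
  by move=> Uim_neq; case: (omega_step Hgr U_idem U_comm U_braid U_char Hm0 Homega lt_i Uim_neq).
Qed.
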